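(* Let $\theta_1,\theta_2\in\Theta$, $\theta_\alpha=\alpha\theta_1+(1-\alpha)\theta_2$. Then for $\alpha\in[0,1]$, $D^{\mathrm w}_{B,\alpha}(p_{\theta_1},p_{\theta_2})=\alpha F(\theta_1)+(1-\alpha)F(\theta_2)-\hat F(\theta_\alpha)$. Assume moreover that $\hat F$ is strictly convex on the segment $[\theta_1,\theta_2]$ and that a maximiser $\alpha^*$ of $\alpha\mapsto D^{\mathrm w}_{B,\alpha}(p_{\theta_1},p_{\theta_2})$ over $[0,1]$ exists and lies in $(0,1)$. Then $\alpha^*$ is unique and satisfies \[ (\theta_1-\theta_2)^{\mathrm T}\nabla\hat F(\theta_{\alpha^*})=F(\theta_1)-F(\theta_2), \] where $\nabla\hat F(\theta)=\mathbb E_{p^*_\theta}[t(X)]$ with $p^*_\theta=\varphi p_\theta/E_\varphi(\theta)$.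
   Context: Let $\mu$ be a $\sigma$-finite measure on $\mathcal X$ and $\varphi\ge0$ a measurable weight. Let $\{p_\theta:\theta\in\Theta\}$, $\Theta\subset\mathbb R^d$ open and convex, be a regular exponential family $p_\theta(x)=\exp\{\theta^{\mathrm T}t(x)-F(\theta)+k(x)\}$. Set $E_\varphi(\theta)=\int\varphi p_\theta\,\mathrm d\mu\in(0,\infty)$ and $\hat F(\theta)=\ln\int\varphi(x)e^{\theta^{\mathrm T}t(x)+k(x)}\,\mathrm d\mu(x)=F(\theta)+\ln E_\varphi(\theta)$, finite and differentiable on $\Theta$ (differentiation under the integral sign allowed). Weighted affinity $\rho^{\mathrm w}_\alpha(p,q)=\int\varphi\,p^\alpha q^{1-\alpha}\,\mathrm d\mu$ and weighted Bhattacharyya distance $D^{\mathrm w}_{B,\alpha}(p,q)=-\ln\rho^{\mathrm w}_\alpha(p,q)$. *)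

From HB Require Import structures.
From mathcomp Require Import all_boot all_order all_algebra.
From mathcomp Require Import all_classical all_reals all_analysis.

Set Implicit Arguments.
Unset Strict Implicit.
Unset Printing Implicit Defensive.

Import Order.TTheory GRing.Theory Num.Theory.
Import numFieldNormedType.Exports.
Local Open Scope classical_set_scope.
Local Open Scope ring_scope.

Section ExpFam.
Context {R : realType} {d0 : measure_display} {T : measurableType d0}.
Variable (mu : {measure set T -> \bar R}) (d : nat).

Definition dotv (th v : 'rV[R]_d) : R := \sum_(i < d) th 0 i * v 0 i.

Variables (t : T -> 'rV[R]_d) (k : T -> R) (phi : T -> R).

Definition expint (th : 'rV[R]_d) (x : T) : R := expR (dotv th (t x) + k x).

Definition Zint (th : 'rV[R]_d) : \bar R := \int[mu]_x (expint th x)%:E.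
Definition Flog (th : 'rV[R]_d) : R := ln (fine (Zint th)).

Definition pdens (th : 'rV[R]_d) (x : T) : R :=
  expR (dotv th (t x) - Flog th + k x).

Definition Ephi (th : 'rV[R]_d) : \bar R := \int[mu]_x (phi x * pdens th x)%:E.

Definition Zhat (th : 'rV[R]_d) : \bar R := \int[mu]_x (phi x * expint th x)%:E.
Definition Zhatr (th : 'rV[R]_d) : R := fine (Zhat th).
Definition Fhat (th : 'rV[R]_d) : R := ln (Zhatr th).

(* E_{p*_theta}[t(X)] with p*_theta = phi p_theta / E_phi(theta) *)
Definition Et (th : 'rV[R]_d) : 'rV[R]_d :=
  \row_(i < d) (fine (\int[mu]_x (t x 0 i * phi x * pdens th x)%:E)
                / fine (Ephi th)).

Definition rho_w (a : R) (p q : T -> R) : R :=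
  fine (\int[mu]_x (phi x * (p x `^ a) * (q x `^ (1 - a)))%:E).
Definition DBw (a : R) (p q : T -> R) : R := - ln (rho_w a p q).

End ExpFam.

Definition convex_set_rV {R : realType} {d : nat} (S : set 'rV[R]_d) : Prop :=
  forall x y, S x -> S y -> forall l : R, 0 <= l <= 1 ->
    S (l *: x + (1 - l) *: y).

Definition segpt {R : realType} {d : nat} (th1 th2 : 'rV[R]_d) (a : R) : 'rV[R]_d :=
  a *: th1 + (1 - a) *: th2.

(* Writing p_theta = e^(theta.t + k - F(theta)), the integrand
   phi p_theta1^a p_theta2^(1-a) of the weighted affinity is
   e^(-a F(theta1) - (1-a) F(theta2)) phi e^(theta_a.t + k), whence the closed form of
   the distance.  Along the segment the distance is therefore an affine function of a
   minus the strictly convex a |-> Fhat(theta_a): it has at most one maximiser, and at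
   an interior maximiser its derivative
   F(theta1) - F(theta2) - (theta1 - theta2).grad Fhat(theta_a) vanishes.  Finally
   grad Fhat = grad Zhat / Zhat, and differentiating Zhat under the integral sign
   identifies this quotient with the mean of t under p*_theta. *)

From HB Require Import structures.
From mathcomp Require Import all_boot all_order all_algebra.
From mathcomp Require Import all_classical all_reals all_analysis.
From mathcomp Require Import ring lra.
From mathcomp Require Import measurable_realfun.
Import Order.TTheory GRing.Theory Num.Theory.
Import numFieldNormedType.Exports.
Local Open Scope classical_set_scope.
Local Open Scope ring_scope.

Section ArgmaxOnUnitInterval.
Context {R : realType}.

Definition strictly_convex01 (g : R -> R) : Prop :=
  forall a b l : R, 0 <= a <= 1 -> 0 <= b <= 1 -> a != b -> 0 < l < 1 ->
    g (l * a + (1 - l) * b) < l * g a + (1 - l) * g b.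

Context {f g : R -> R} {A B : R}.
Hypothesis fE : forall a, 0 <= a <= 1 -> f a = a * A + (1 - a) * B - g a.

Lemma argmax01_unique : strictly_convex01 g ->
  forall a b, 0 <= a <= 1 -> 0 <= b <= 1 ->
  (forall c, 0 <= c <= 1 -> f c <= f a) ->
  (forall c, 0 <= c <= 1 -> f c <= f b) -> a = b.
Proof.
move=> gconv a b a01 b01 amax bmax; apply/eqP; apply: contraT => ab.
set m := 2^-1 * a + (1 - 2^-1) * b.
have m01 : 0 <= m <= 1.
  by move: a01 b01 => /andP[? ?] /andP[? ?]; apply/andP; split; rewrite /m; lra.
have half01 : 0 < (2 : R)^-1 < 1 by apply/andP; split; lra.
have := gconv a b 2^-1 a01 b01 ab half01.
have := amax m m01; have := amax b b01; have := bmax a a01.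
rewrite -/m !fE //.
have -> : m * A + (1 - m) * B = 2^-1 * (a * A + (1 - a) * B)
                                + (1 - 2^-1) * (b * A + (1 - b) * B).
  by rewrite /m; ring.
move: (a * A + (1 - a) * B) (b * A + (1 - b) * B) => La Lb; lra.
Qed.

Lemma derive_at_interior_argmax01 s :
  (forall a, 0 < a < 1 -> derivable g a 1) ->
  0 < s < 1 -> (forall a, 0 <= a <= 1 -> f a <= f s) ->
  'D_1 g s = A - B.
Proof.
move=> dg s01 smax.
set h := (A - B) \*: (@idfun R) - g.
have in01 (a : R) : a \in `]0, 1[ -> 0 <= a <= 1.
  by rewrite in_itv /= => /andP[? ?]; rewrite !ltW.
have dh (a : R) : a \in `]0, 1[ -> derivable h a 1.
  move=> a01; apply: derivableB; last by apply: dg; rewrite in_itv /= in a01.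
  by apply: derivableZ; exact: derivable_id.
have hE (a : R) : 0 <= a <= 1 -> h a = f a - B.
  by move/fE=> ->; have -> : h a = (A - B) * a - g a by []; ring.
have hmax (a : R) : a \in `]0, 1[ -> h a <= h s.
  by move=> /in01 a01; rewrite !hE ?lerD2r ?smax // !ltW //; case/andP: s01.
have [_ /eqP] := derive1_at_max ler01 dh (s01 : s \in `]0, 1[) hmax.
rewrite deriveB ?deriveZ ?derive_id; first last.
- exact: dg.
- by apply: derivableZ; exact: derivable_id.
- exact: derivable_id.
by rewrite [_%:A]mulr1 subr_eq0 => /eqP <-.
Qed.

End ArgmaxOnUnitInterval.

Lemma dotv_segpt {R : realType} {d : nat} (th1 th2 v : 'rV[R]_d) (a : R) :
  dotv (segpt th1 th2 a) v = a * dotv th1 v + (1 - a) * dotv th2 v.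
Proof.
rewrite /dotv !mulr_sumr -big_split; apply: eq_bigr => i _.
by rewrite !mxE mulrDl !mulrA.
Qed.

Section WeightedExponentialFamily.
Context {R : realType} {d0 : measure_display} {T : measurableType d0}.
Variables (mu : {measure set T -> \bar R}) (d : nat) (t : T -> 'rV[R]_d)
  (k : T -> R) (phi : T -> R).
Hypotheses (mphi : measurable_fun setT phi) (mk : measurable_fun setT k)
  (mt : forall i : 'I_d, measurable_fun setT (fun x => t x 0 i))
  (phi_ge0 : forall x, 0 <= phi x).

Local Notation F := (Flog mu t k).
Local Notation Zhatr := (Zhatr mu t k phi).

Lemma measurable_expint th : measurable_fun setT (expint t k th).
Proof.
apply: measurableT_comp; first exact: measurable_expR.
apply: measurable_funD => //; apply: measurable_sum => i.
by apply: measurable_funM => //; exact: measurable_cst.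
Qed.

Lemma measurable_phi_expint th :
  measurable_fun setT (fun x => (phi x * expint t k th x)%:E).
Proof.
by apply/measurable_EFinP; apply: measurable_funM => //; exact: measurable_expint.
Qed.

Lemma phi_expint_ge0 th x : 0 <= phi x * expint t k th x.
Proof. by rewrite mulr_ge0 ?expR_ge0. Qed.

Lemma pdensE th x : pdens mu t k th x = expR (- F th) * expint t k th x.
Proof. by rewrite /pdens /expint -expRD; congr expR; ring. Qed.

Lemma Ephi_Zhat th : Ephi mu t k phi th = ((expR (- F th))%:E * Zhat mu t k phi th)%E.
Proof.
rewrite /Ephi /Zhat; under eq_integral do rewrite pdensE mulrCA EFinM.
apply: ge0_integralZl_EFin; rewrite ?expR_ge0 //; last exact: measurable_phi_expint.
by move=> x _; rewrite lee_fin phi_expint_ge0.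
Qed.

Lemma ZhatrE th : (0 < Ephi mu t k phi th < +oo)%E ->
  Zhat mu t k phi th = (Zhatr th)%:E.
Proof.
have Zhat_ge0 : (0 <= Zhat mu t k phi th)%E.
  by apply: integral_ge0 => x _; rewrite lee_fin phi_expint_ge0.
rewrite Ephi_Zhat /Zhatr.
case: (Zhat mu t k phi th) Zhat_ge0 => [r| |] //= _.
by rewrite gt0_muley ?lte_fin ?expR_gt0 // ltxx andbF.
Qed.

Lemma Zhatr_gt0 th : (0 < Ephi mu t k phi th < +oo)%E -> 0 < Zhatr th.
Proof.
move=> Epos; move: (Epos); rewrite Ephi_Zhat ZhatrE // -EFinM lte_fin => /andP[+ _].
by rewrite pmulr_rgt0 ?expR_gt0.
Qed.

Lemma mul_powR_pdens th1 th2 a x :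
  phi x * (pdens mu t k th1 x `^ a) * (pdens mu t k th2 x `^ (1 - a)) =
  expR (- (a * F th1 + (1 - a) * F th2)) * (phi x * expint t k (segpt th1 th2 a) x).
Proof.
rewrite /pdens /expint dotv_segpt.
move: (dotv th1 (t x)) (dotv th2 (t x)) (F th1) (F th2) (k x) (phi x).
move=> D1 D2 F1 F2 kx p; rewrite -!expRM -mulrA -expRD mulrCA -expRD.
by congr (_ * expR _); ring.
Qed.

Lemma DBw_pdens th1 th2 a :
  (0 < Ephi mu t k phi (segpt th1 th2 a) < +oo)%E ->
  DBw mu phi a (pdens mu t k th1) (pdens mu t k th2) =
  a * F th1 + (1 - a) * F th2 - Fhat mu t k phi (segpt th1 th2 a).
Proof.
move=> Epos; rewrite /DBw /rho_w.
under eq_integral do rewrite mul_powR_pdens EFinM.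
rewrite ge0_integralZl_EFin ?expR_ge0 //; last exact: measurable_phi_expint; last first.
  by move=> x _; rewrite lee_fin phi_expint_ge0.
rewrite -/(Zhat mu t k phi _) ZhatrE // /= /Fhat.
by rewrite lnM ?posrE ?expR_gt0 ?Zhatr_gt0 // expRK; ring.
Qed.

Section WeightedMeanOfT.
Variable th : 'rV[R]_d.
Hypotheses (Ephi_pos_fin : (0 < Ephi mu t k phi th < +oo)%E)
  (integrable_t : forall i : 'I_d,
     mu.-integrable setT (fun x => (t x 0 i * phi x * expint t k th x)%:E)).

Let It i := fine (\int[mu]_x (t x 0 i * phi x * expint t k th x)%:E).

Let ItE i : (\int[mu]_x (t x 0 i * phi x * expint t k th x)%:E = (It i)%:E)%E.
Proof. by rewrite /It fineK // (integrable_fin_num measurableT (integrable_t i)). Qed.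

Lemma Et_entry i : Et mu t k phi th 0 i = It i / Zhatr th.
Proof.
rewrite mxE Ephi_Zhat ZhatrE // /=.
under eq_integral => x _ do rewrite pdensE (mulrC (expR _)) mulrA EFinM.
rewrite (integralZr measurableT (integrable_t i)) ItE /=.
have := expR_gt0 (- F th); have := Zhatr_gt0 _ Ephi_pos_fin.
move: (It i) (Zhatr th) (expR (- F th)) => I Z e Z0 e0.
by field; rewrite !gt_eqF.
Qed.

Lemma integral_dotv_t v :
  fine (\int[mu]_x (phi x * dotv v (t x) * expint t k th x)%:E) =
  \sum_(i < d) v 0 i * It i.
Proof.
have dotv_sum x : (phi x * dotv v (t x) * expint t k th x)%:E =
    (\sum_(i < d) (v 0 i)%:E * (t x 0 i * phi x * expint t k th x)%:E)%E.
  under eq_bigr do rewrite -EFinM.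
  rewrite sumEFin /dotv mulr_sumr mulr_suml; congr EFin; apply: eq_bigr => i _.
  by move: (t x 0 i) (phi x) (expint t k th x) (v 0 i) => a b c e; ring.
under eq_integral => x _ do rewrite dotv_sum.
rewrite integral_sum //; last by move=> i; exact: integrableZl.
under eq_bigr => i _ do rewrite (integralZl measurableT (integrable_t i)) ItE -EFinM.
by rewrite sumEFin.
Qed.

Lemma Et_dotv v :
  dotv v (Et mu t k phi th) =
  fine (\int[mu]_x (phi x * dotv v (t x) * expint t k th x)%:E) / Zhatr th.
Proof.
rewrite integral_dotv_t /dotv mulr_suml; apply: eq_bigr => i _.
by rewrite Et_entry mulrA.
Qed.

End WeightedMeanOfT.

End WeightedExponentialFamily.

Section DerivativeOfLn.
Context {R : realType} {V : normedModType R}.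

Lemma derive_along_line (f : V -> R) x v :
  'D_v f x = 'D_1 (fun h : R => f (h *: v + x)) 0.
Proof.
rewrite /derive; set g1 := fun h => h^-1 *: _; set g2 := fun h => h^-1 *: _.
suff -> : g1 = g2 by [].
by apply/funext => h; rewrite /g1 /g2 /= addr0 scale0r add0r [_%:A]mulr1.
Qed.

Context {f : V -> R} {x : V}.
Hypotheses (f_gt0 : 0 < f x) (df : differentiable f x).

Lemma differentiable_ln_comp : differentiable (fun y => ln (f y)) x.
Proof.
apply: (differentiable_comp df); apply/derivable1_diffP.
by case: (is_derive1_ln f_gt0).
Qed.

Lemma derive_ln_comp v : 'D_v (fun y => ln (f y)) x = 'D_v f x / f x.
Proof.
rewrite (derive_along_line (fun y => ln (f y))) (derive_along_line f).
pose z := fun h : R => f (h *: v + x); rewrite -/z.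
have z0 : z 0 = f x by rewrite /z scale0r add0r.
have dz : derivable z 0 1 := (derivable1P f x v).1 (diff_derivable df).
have dln : derivable (@ln R) (z 0) 1 by rewrite z0; case: (is_derive1_ln f_gt0).
have := derive1_comp dz dln; rewrite !derive1E => ->.
by rewrite z0; case: (is_derive1_ln f_gt0) => _ ->; rewrite mulrC.
Qed.

End DerivativeOfLn.

Section RestrictionToSegment.
Context {R : realType} {d : nat}.
Variables (G : 'rV[R]_d -> R) (th1 th2 : 'rV[R]_d).

Lemma segpt_shift s h :
  segpt th1 th2 (h *: 1 + s) = h *: (th1 - th2) + segpt th1 th2 s.
Proof. by rewrite /segpt [_%:A]mulr1; apply/rowP => i; rewrite !mxE; ring. Qed.

Let segpt_line s : (fun h : R => G (segpt th1 th2 (h *: 1 + s))) =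
  (fun h => G (h *: (th1 - th2) + segpt th1 th2 s)).
Proof. by apply/funext => h; rewrite segpt_shift. Qed.

Lemma derivable_segpt s : differentiable G (segpt th1 th2 s) ->
  derivable (fun a => G (segpt th1 th2 a)) s 1.
Proof.
move=> dG; apply/derivable1P; rewrite segpt_line.
exact: (derivable1P G _ _).1 (diff_derivable dG).
Qed.

Lemma derive_segpt s :
  'D_1 (fun a => G (segpt th1 th2 a)) s = 'D_(th1 - th2) G (segpt th1 th2 s).
Proof. by rewrite derive_along_line segpt_line -derive_along_line. Qed.

End RestrictionToSegment.

Theorem proposition3p5 (R : realType) (d0 : measure_display) (T : measurableType d0)
  (mu : {measure set T -> \bar R}) (d : nat)
  (t : T -> 'rV[R]_d) (k : T -> R) (phi : T -> R) (Theta : set 'rV[R]_d)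
  (th1 th2 : 'rV[R]_d) :
  sigma_finite setT mu ->
  measurable_fun setT phi -> (forall x, 0 <= phi x) ->
  measurable_fun setT k ->
  (forall i : 'I_d, measurable_fun setT (fun x => t x 0 i)) ->
  open Theta -> convex_set_rV Theta ->
  (* regular exponential family: normaliser finite on Theta *)
  (forall th, Theta th -> (Zint mu t k th < +oo)%E) ->
  (* E_phi(theta) in (0, oo) on Theta *)
  (forall th, Theta th -> (0 < Ephi mu t k phi th < +oo)%E) ->
  (* differentiation under the integral sign is allowed *)
  (forall th, Theta th ->
     (forall i : 'I_d,
        mu.-integrable setT (fun x => (t x 0 i * phi x * expint t k th x)%:E)) /\
     differentiable (Zhatr mu t k phi) th /\
     (forall v : 'rV[R]_d,
        'D_v (Zhatr mu t k phi) th =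
        fine (\int[mu]_x (phi x * dotv v (t x) * expint t k th x)%:E))) ->
  Theta th1 -> Theta th2 ->
  (* part 1: closed form of the weighted Bhattacharyya distance *)
  (forall a : R, 0 <= a <= 1 ->
     DBw mu phi a (pdens mu t k th1) (pdens mu t k th2) =
     a * Flog mu t k th1 + (1 - a) * Flog mu t k th2
       - Fhat mu t k phi (segpt th1 th2 a))
  /\
  (* part 2 *)
  ((forall a b l : R, 0 <= a <= 1 -> 0 <= b <= 1 -> a != b -> 0 < l < 1 ->
      Fhat mu t k phi (segpt th1 th2 (l * a + (1 - l) * b)) <
      l * Fhat mu t k phi (segpt th1 th2 a)
        + (1 - l) * Fhat mu t k phi (segpt th1 th2 b)) ->
   forall astar : R, 0 < astar < 1 ->
   (forall a : R, 0 <= a <= 1 ->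
      DBw mu phi a (pdens mu t k th1) (pdens mu t k th2) <=
      DBw mu phi astar (pdens mu t k th1) (pdens mu t k th2)) ->
   (forall b : R, 0 <= b <= 1 ->
      (forall a : R, 0 <= a <= 1 ->
         DBw mu phi a (pdens mu t k th1) (pdens mu t k th2) <=
         DBw mu phi b (pdens mu t k th1) (pdens mu t k th2)) ->
      b = astar)
   /\ 'D_(th1 - th2) (Fhat mu t k phi) (segpt th1 th2 astar)
        = Flog mu t k th1 - Flog mu t k th2
   /\ dotv (th1 - th2) (Et mu t k phi (segpt th1 th2 astar))
        = Flog mu t k th1 - Flog mu t k th2).
Proof.
move=> _ mphi phi_ge0 mk mt _ Theta_convex _ Ephi_pos diff_Zhat Theta1 Theta2.
have seg_in a : 0 <= a <= 1 -> Theta (segpt th1 th2 a) by exact: Theta_convex.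
have DBwE a : 0 <= a <= 1 ->
    DBw mu phi a (pdens mu t k th1) (pdens mu t k th2) =
    a * Flog mu t k th1 + (1 - a) * Flog mu t k th2
      - Fhat mu t k phi (segpt th1 th2 a).
  by move=> a01; apply: DBw_pdens => //; exact/Ephi_pos/seg_in.
have closed01 (a : R) : 0 < a < 1 -> 0 <= a <= 1 by case/andP=> ? ?; rewrite !ltW.
have Zhat_pos_diff a : 0 < a < 1 ->
    0 < Zhatr mu t k phi (segpt th1 th2 a) /\
    differentiable (Zhatr mu t k phi) (segpt th1 th2 a).
  move=> /closed01/seg_in Ta; have [_ [dZ _]] := diff_Zhat _ Ta.
  by split=> //; apply: Zhatr_gt0 => //; exact: Ephi_pos.
split=> // Fhat_convex astar astar01 astar_max.
have DFhat : 'D_(th1 - th2) (Fhat mu t k phi) (segpt th1 th2 astar)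
    = Flog mu t k th1 - Flog mu t k th2.
  rewrite -derive_segpt; apply: (derive_at_interior_argmax01 DBwE) => // a a01.
  have [Z_gt0 dZ] := Zhat_pos_diff a a01.
  exact/derivable_segpt/(differentiable_ln_comp Z_gt0 dZ).
split; first by move=> b b01 b_max; apply: (argmax01_unique DBwE) => //; exact: closed01.
split=> //; rewrite -DFhat.
have Tastar := seg_in astar (closed01 astar astar01).
have [int_t [_ DZ]] := diff_Zhat _ Tastar.
have [Z_gt0 dZ] := Zhat_pos_diff astar astar01.
by rewrite Et_dotv ?Ephi_pos // -DZ (derive_ln_comp Z_gt0 dZ).
Qed.
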